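(* There is an absolute constant $\epsilon_0>0$ such that the following holds. Let $n\ge 2$, $\mathcal F\subseteq S_n$, $f=2\chi_{\mathcal F}-1$, $f_1$ its projection onto $U_1$, $\epsilon=\mathbb E[(f-f_1)^2]$ with $0<\epsilon<\epsilon_0$, and let $(X,Y)$ be a typical restriction. Choose $\alpha,\beta$ independently and uniformly from $T_{X,Y}$, and write $\alpha_1,\beta_1$ for their restrictions to $X$ and $\alpha_2,\beta_2$ for their restrictions to $[n]\setminus X$. Then with probability at least $1-8\epsilon^{2/7}$ one of the following holds: (a) $|g_1(\alpha_1)-g_1(\beta_1)|\le 2\epsilon^{1/7}$ and $|g_2(\alpha_2)-g_2(\beta_2)|\le2\epsilon^{1/7}$; (b) $|g_1(\alpha_1)-g_1(\beta_1)|\le 2\epsilon^{1/7}$ and $|g_2(\alpha_2)-g_2(\beta_2)|\in[2-2\epsilon^{1/7},2+2\epsilon^{1/7}]$; (c) $|g_1(\alpha_1)-g_1(\beta_1)|\in[2-2\epsilon^{1/7},2+2\epsilon^{1/7}]$ and $|g_2(\alpha_2)-g_2(\beta_2)|\le2\epsilon^{1/7}$.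
   Context: $S_n$ is the symmetric group on $[n]$; $T_{ij}$ is the indicator of $\{\pi:\pi(i)=j\}$; $U_1=\mathrm{span}\{T_{ij}\}$ with inner product $\langle f,g\rangle=\frac1{n!}\sum_\pi f(\pi)g(\pi)$. With $|\mathcal F|=c\,n!$, let $a_{ij}=(n-1)\langle f,T_{ij}\rangle-\frac{n-2}{n}(2c-1)$. A restriction is $(X,Y)$ with $X,Y\subseteq[n]$, $|X|=|Y|$; $T_{X,Y}=\{\pi:\pi(X)=Y\}$ with uniform measure. For $\pi\in T_{X,Y}$, $g_1(\pi)=\sum_{i\in X}a_{i\pi(i)}$ (depending only on $\pi|_X$), $g_2(\pi)=\sum_{i\notin X}a_{i\pi(i)}$ (depending only on $\pi|_{[n]\setminus X}$), $g=g_1+g_2$. A function $\phi$ is $(\delta,\epsilon)$-almost Boolean if $\Pr[||\phi|-1|\le\epsilon]\ge1-\delta$. A restriction is typical if: (a) $g$ is $(\epsilon^{4/7},\epsilon^{1/7})$-almost Boolean on $T_{X,Y}$; (b) $\mathbb E[g_1],\mathbb E[g_2]$ are within $\epsilon^{1/7}$ of $c-\frac12$; (c) $\mathbb E[(|g|-1)^2]\le\epsilon^{6/7}$. *)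

From Stdlib Require Import Reals ClassicalEpsilon.
From HB Require Import structures.
From mathcomp Require Import all_boot all_fingroup.

Set Implicit Arguments.
Unset Strict Implicit.
Unset Printing Implicit Defensive.

Local Open Scope R_scope.

Definition rsum (T : finType) (A : {pred T}) (F : T -> R) : R :=
  \big[Rplus/0]_(x in A) F x.

Definition ind (P : Prop) : R :=
  if excluded_middle_informative P then 1 else 0.

Definition Eu (T : finType) (A : {set T}) (phi : T -> R) : R :=
  / INR #|A| * rsum (mem A) phi.
Definition Pru (T : finType) (A : {set T}) (P : T -> Prop) : R :=
  Eu A (fun x => ind (P x)).

Definition Tij (n : nat) (i j : 'I_n) (p : {perm 'I_n}) : R :=
  if p i == j then 1 else 0.

Definition ip (n : nat) (f g : {perm 'I_n} -> R) : R :=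
  / INR (n`!) * rsum (mem [set: {perm 'I_n}]) (fun p => f p * g p).

Definition inU1 (n : nat) (h : {perm 'I_n} -> R) : Prop :=
  exists a : 'I_n -> 'I_n -> R, forall p,
    h p = rsum (mem [set: 'I_n]) (fun i => rsum (mem [set: 'I_n]) (fun j => a i j * Tij i j p)).

Definition is_proj_U1 (n : nat) (f f1 : {perm 'I_n} -> R) : Prop :=
  inU1 f1 /\ forall i j : 'I_n, ip (fun p => f p - f1 p) (Tij i j) = 0.

Definition fF (n : nat) (F : {set {perm 'I_n}}) (p : {perm 'I_n}) : R :=
  2 * (if p \in F then 1 else 0) - 1.

Definition cF (n : nat) (F : {set {perm 'I_n}}) : R := INR #|F| / INR (n`!).

Definition acoef (n : nat) (F : {set {perm 'I_n}}) (i j : 'I_n) : R :=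
  (INR n - 1) * ip (fF F) (Tij i j) - (INR n - 2) / INR n * (2 * cF F - 1).

Definition TXY (n : nat) (X Y : {set 'I_n}) : {set {perm 'I_n}} :=
  [set p : {perm 'I_n} | [set p x | x in X] == Y].

Definition g1 (n : nat) (F : {set {perm 'I_n}}) (X : {set 'I_n}) (p : {perm 'I_n}) : R :=
  rsum (mem X) (fun i => acoef F i (p i)).
Definition g2 (n : nat) (F : {set {perm 'I_n}}) (X : {set 'I_n}) (p : {perm 'I_n}) : R :=
  rsum (mem (~: X)) (fun i => acoef F i (p i)).
Definition gfun (n : nat) (F : {set {perm 'I_n}}) (X : {set 'I_n}) (p : {perm 'I_n}) : R :=
  g1 F X p + g2 F X p.

Definition almost_boolean (T : finType) (A : {set T}) (phi : T -> R) (delta e : R) : Prop :=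
  Pru A (fun x => Rabs (Rabs (phi x) - 1) <= e) >= 1 - delta.

Definition typical (n : nat) (F : {set {perm 'I_n}}) (X Y : {set 'I_n}) (eps : R) : Prop :=
  let T := TXY X Y in
  almost_boolean T (gfun F X) (Rpower eps (4/7)) (Rpower eps (1/7)) /\
  Rabs (Eu T (g1 F X) - (cF F - 1/2)) <= Rpower eps (1/7) /\
  Rabs (Eu T (g2 F X) - (cF F - 1/2)) <= Rpower eps (1/7) /\
  Eu T (fun p => (Rabs (gfun F X p) - 1) ^ 2) <= Rpower eps (6/7).

From Pilot Require Import Defs.
From Stdlib Require Import Reals Lra ClassicalEpsilon.
From HB Require Import structures.
From mathcomp Require Import all_boot all_fingroup.

(* Proof of Lemma 2.6.  Write T = T_{X,Y} and call p in T good when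
   | |g(p)| - 1 | <= t, where t = eps^(1/7); typicality (a) says that a
   uniformly random p is good with probability at least 1 - t^4.
   For a pair (a, b) in T x T, splicing a on X with b off X, and b on X with
   a off X, gives two new permutations of T; the swap (a, b) |-> (a|b, b|a)
   is an involution of T x T, hence preserves the uniform measure.  Since
   g1 only sees X and g2 only sees its complement, goodness of a, b, a|b and
   b|a says that the four sums g1(a)+g2(a), g1(b)+g2(b), g1(a)+g2(b),
   g1(b)+g2(a) are all within t of +-1, which forces the dichotomy (a)-(c)
   of the statement as soon as t < 1/2.  A union bound over the four events
   gives probability at least 1 - 4 t^4 >= 1 - 8 t^2 = 1 - 8 eps^(2/7). *)

Set Implicit Arguments.
Unset Strict Implicit.
Unset Printing Implicit Defensive.

Local Open Scope R_scope.

HB.instance Definition _ := Monoid.isComLaw.Build R R0 Rplus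
  (fun x y z => esym (Rplus_assoc x y z)) Rplus_comm Rplus_0_l.

Lemma rsum_const (T : finType) (A : {set T}) (c : R) :
  rsum (mem A) (fun _ => c) = INR #|A| * c.
Proof.
rewrite /rsum big_const; elim: #|A| => [|k IH]; first by rewrite /=; lra.
by rewrite iterS IH S_INR; lra.
Qed.

Lemma rsum_scal (T : finType) (A : {pred T}) (c : R) (F : T -> R) :
  rsum A (fun x => c * F x) = c * rsum A F.
Proof. by rewrite /rsum; elim/big_rec2: _ => [|i y1 y2 _ ->]; lra. Qed.

Lemma rsum_le (T : finType) (A : {pred T}) (F G : T -> R) :
  (forall x, x \in A -> F x <= G x) -> rsum A F <= rsum A G.
Proof.
move=> le_FG; rewrite /rsum; elim/big_rec2: _ => [|i y1 y2 Ai IH]; first lra.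
by have := le_FG i Ai; lra.
Qed.

Lemma rsum_setX (T : finType) (A B : {set T}) (F : T * T -> R) :
  rsum (mem (setX A B)) F = rsum (mem A) (fun a => rsum (mem B) (fun b => F (a, b))).
Proof.
rewrite /rsum pair_big /=; apply: eq_big => [[a b]|[a b] _] //=.
by rewrite in_setX.
Qed.

Lemma rsum_involution (T : finType) (A : {set T}) (s : T -> T) (F : T -> R) :
  {in A, forall x, s x \in A /\ s (s x) = x} ->
  rsum (mem A) (fun x => F (s x)) = rsum (mem A) F.
Proof.
move=> sA; have inj_s : {in A &, injective s}.
  by move=> x y Ax Ay sxy; rewrite -(proj2 (sA x Ax)) sxy (proj2 (sA y Ay)).
have imA : s @: A = A.
  apply/eqP; rewrite eqEcard card_in_imset // leqnn andbT.
  by apply/subsetP => _ /imsetP [x Ax ->]; exact: (proj1 (sA x Ax)).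
by rewrite /rsum -[in RHS]imA big_imset.
Qed.

Lemma rsum_add (T : finType) (A : {pred T}) (F G : T -> R) :
  rsum A (fun x => F x + G x) = rsum A F + rsum A G.
Proof. exact: big_split. Qed.

Lemma ind_imp (P Q : Prop) : (P -> Q) -> Defs.ind P <= Defs.ind Q.
Proof.
rewrite /Defs.ind => PQ; do 2 case: excluded_middle_informative => ? /=; intuition lra.
Qed.

Lemma ind_and (P Q : Prop) : Defs.ind P + Defs.ind Q - 1 <= Defs.ind (P /\ Q).
Proof.
rewrite /Defs.ind; do 3 case: excluded_middle_informative => ? /=; intuition lra.
Qed.

Section UniformProbability.
Variable T : finType.
Implicit Types (A : {set T}) (P Q : T -> Prop).

(* The normalising factor 1/|A| of the uniform measure (1/0 = 0 in R). *)
Lemma inv_card_ge0 A : 0 <= / INR #|A|.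
Proof.
have [->|A_gt0] := posnP #|A|; first by rewrite Rinv_0; lra.
by apply/Rlt_le/Rinv_0_lt_compat/lt_0_INR/ltP.
Qed.

Lemma Pru_mono A P Q : (forall x, x \in A -> P x -> Q x) -> Pru A P <= Pru A Q.
Proof.
move=> PQ; apply: Rmult_le_compat_l; first exact: inv_card_ge0.
by apply: rsum_le => x Ax; apply/ind_imp/PQ.
Qed.

Lemma Pru_and A P Q : (0 < #|A|)%N -> Pru A P + Pru A Q - 1 <= Pru A (fun x => P x /\ Q x).
Proof.
move=> A_gt0; have N_gt0 : 0 < INR #|A| by apply/lt_0_INR/ltP.
have sum_le := rsum_le (A := mem A) (fun x _ => ind_and (P x) (Q x)).
rewrite !rsum_add rsum_const in sum_le.
rewrite /Pru /Eu; set i := / INR #|A|.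
have iN : i * INR #|A| = 1 by apply: Rinv_l; lra.
have i_gt0 : 0 < i by apply: Rinv_0_lt_compat.
(* scale the summed pointwise inequality by i = 1/|A| *)
nra.
Qed.

Lemma Pru_and4 A P1 P2 P3 P4 : (0 < #|A|)%N ->
  Pru A P1 + Pru A P2 + Pru A P3 + Pru A P4 - 3 <=
  Pru A (fun x => P1 x /\ P2 x /\ P3 x /\ P4 x).
Proof.
move=> A_gt0.
have bound34 : Pru A P3 + Pru A P4 - 1 <= Pru A (fun x => P3 x /\ P4 x) by exact: Pru_and.
have bound234 : Pru A P2 + Pru A P3 + Pru A P4 - 2 <= Pru A (fun x => P2 x /\ P3 x /\ P4 x).
  by apply: Rle_trans (Pru_and P2 (fun x => P3 x /\ P4 x) A_gt0); lra.
by apply: Rle_trans (Pru_and P1 (fun x => P2 x /\ P3 x /\ P4 x) A_gt0); lra.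
Qed.

Lemma Pru_involution A (s : T -> T) P :
  {in A, forall x, s x \in A /\ s (s x) = x} -> Pru A (fun x => P (s x)) = Pru A P.
Proof. by move=> sA; rewrite /Pru /Eu (rsum_involution (fun x => Defs.ind (P x)) sA). Qed.

Lemma Pru_nonempty A P : 0 < Pru A P -> (0 < #|A|)%N.
Proof.
rewrite lt0n => pos; apply/negP => /eqP/cards0_eq A0.
by move: pos; rewrite A0 /Pru /Eu /rsum big_set0 Rmult_0_r; lra.
Qed.

End UniformProbability.

Section ProductProbability.
Variable T : finType.
Implicit Types (A B : {set T}) (P : T -> Prop).

Lemma Pru_fst A B P : (0 < #|B|)%N -> Pru (setX A B) (fun x => P x.1) = Pru A P.
Proof.
move=> B_gt0; have NB : INR #|B| <> 0 by apply/not_0_INR/eqP; rewrite -lt0n.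
rewrite /Pru /Eu rsum_setX cardsX mult_INR Rinv_mult /=.
have -> : rsum (mem A) (fun a => rsum (mem B) (fun=> Defs.ind (P a)))
          = rsum (mem A) (fun a => INR #|B| * Defs.ind (P a)).
  by apply: eq_bigr => a _; rewrite rsum_const.
by rewrite rsum_scal Rmult_assoc -(Rmult_assoc (/ INR #|B|)) Rinv_l // Rmult_1_l.
Qed.

Lemma Pru_snd A B P : (0 < #|A|)%N -> Pru (setX A B) (fun x => P x.2) = Pru B P.
Proof.
move=> A_gt0; have NA : INR #|A| <> 0 by apply/not_0_INR/eqP; rewrite -lt0n.
rewrite /Pru /Eu rsum_setX cardsX mult_INR Rinv_mult /= rsum_const.
by rewrite (Rmult_comm (/ INR #|A|)) Rmult_assoc -(Rmult_assoc (/ INR #|A|)) Rinv_l // Rmult_1_l.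
Qed.

End ProductProbability.

Section Splice.
Variables (T : finType) (X : {set T}).
Local Open Scope group_scope.
Implicit Types a b : {perm T}.

(* splice a b agrees with a on X and with b off X; it is a permutation
   whenever a(X) = b(X), as a * b^-1 then restricts to a permutation of X. *)
Definition splice a b : {perm T} := restr_perm X (a * b^-1) * b.

Lemma splice_normalizer a b : a @: X = b @: X -> a * b^-1 \in 'N(X | 'P).
Proof.
move=> abX; apply/astabsP => i /=; rewrite apermE permM.
apply/idP/idP => [Xbai|Xi].
  by rewrite -(mem_imset X i (@perm_inj _ a)) abX -(permKV b (a i)) imset_f.
have : a i \in b @: X by rewrite -abX imset_f.
by case/imsetP => x Xx ->; rewrite permK.
Qed.

Lemma spliceE a b : a @: X = b @: X -> forall i, splice a b i = if i \in X then a i else b i.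
Proof.
move=> abX i; rewrite permM; case: ifP => iX.
  by rewrite restr_permE ?splice_normalizer // permM permKV.
by rewrite (out_perm (restr_perm_on _ _)) ?iX.
Qed.

Lemma splice_imset a b : a @: X = b @: X -> splice a b @: X = a @: X.
Proof. by move=> abX; apply: eq_in_imset => i Xi; rewrite spliceE ?Xi. Qed.

Lemma splice_swapK a b : a @: X = b @: X -> splice (splice a b) (splice b a) = a.
Proof.
move=> abX; have baX := esym abX.
have sX : splice a b @: X = splice b a @: X by rewrite !splice_imset.
by apply/permP => i; rewrite !spliceE //; case: (i \in X).
Qed.

End Splice.

Definition near_sign (t x : R) : Prop := Rabs (Rabs x - 1) <= t.

Definition dichotomy (t d1 d2 : R) : Prop :=
  (d1 <= 2 * t /\ d2 <= 2 * t) \/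
  (d1 <= 2 * t /\ 2 - 2 * t <= d2 <= 2 + 2 * t) \/
  (2 - 2 * t <= d1 <= 2 + 2 * t /\ d2 <= 2 * t).

(* If the four cross sums of (A1, A2) and (B1, B2) are all close to +-1, then
   A1 - B1 = (A1 + A2) - (B1 + A2) and A2 - B2 = (A1 + A2) - (A1 + B2) are each
   close to 0 or +-2, and they cannot both be close to +-2 because
   (A1 + A2) + (B1 + B2) = (A1 + B2) + (B1 + A2). *)
Lemma four_sums_dichotomy (t A1 A2 B1 B2 : R) : 0 < t < 1/2 ->
  near_sign t (A1 + A2) -> near_sign t (B1 + B2) ->
  near_sign t (A1 + B2) -> near_sign t (B1 + A2) ->
  dichotomy t (Rabs (A1 - B1)) (Rabs (A2 - B2)).
Proof.
rewrite /near_sign /dichotomy => t_bounds.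
by rewrite /Rabs; repeat case: Rcase_abs; lra.
Qed.

Lemma Rpower_mult_pow (x y : R) (k : nat) : 0 < x -> Rpower x (y * INR k) = Rpower x y ^ k.
Proof.
move=> x_gt0; rewrite -Rpower_mult Rpower_pow //.
by rewrite /Rpower; apply: exp_pos.
Qed.

Lemma Rpower_sevenths (eps : R) (k : nat) : 0 < eps ->
  Rpower eps (IZR (Z.of_nat k) / 7) = Rpower eps (1/7) ^ k.
Proof. by move=> eps_gt0; rewrite -Rpower_mult_pow // INR_IZR_INZ; congr Rpower; field. Qed.

Lemma seventh_root_small (eps : R) : 0 < eps < / 128 -> 0 < Rpower eps (1/7) < 1/2.
Proof.
move=> [eps_gt0 eps_small]; split; first exact: exp_pos.
apply: Rnot_le_lt => t_large.
have := pow_incr (1/2) _ 7 (conj (ltac:(lra) : 0 <= 1/2) t_large).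
rewrite -(Rpower_sevenths 7 eps_gt0) /= /Rdiv Rinv_r ?Rpower_1 //; lra.
Qed.

Section SwapHalves.
Variables (n : nat) (X Y : {set 'I_n}).
Local Notation TT := (TXY X Y).

Lemma inTXY (a : {perm 'I_n}) : (a \in TT) = (a @: X == Y).
Proof. by rewrite inE. Qed.

Lemma splice_TXY a b : a \in TT -> b \in TT -> splice X a b \in TT.
Proof. by rewrite !inTXY => /eqP aX /eqP bX; rewrite splice_imset ?aX ?bX. Qed.

Definition swap_halves (x : {perm 'I_n} * {perm 'I_n}) := (splice X x.1 x.2, splice X x.2 x.1).

Lemma swap_halves_involution :
  {in setX TT TT, forall x, swap_halves x \in setX TT TT /\ swap_halves (swap_halves x) = x}.
Proof.
move=> [a b] /setXP [Ta Tb]; rewrite /swap_halves /= in_setX !splice_TXY //.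
move: Ta Tb; rewrite !inTXY => /eqP aX /eqP bX.
by rewrite !splice_swapK ?aX ?bX.
Qed.

Lemma g1_splice F a b : a \in TT -> b \in TT -> g1 F X (splice X a b) = g1 F X a.
Proof.
rewrite !inTXY => /eqP aX /eqP bX; apply: eq_bigr => i Xi.
by rewrite spliceE ?aX ?bX // Xi.
Qed.

Lemma g2_splice F a b : a \in TT -> b \in TT -> g2 F X (splice X a b) = g2 F X b.
Proof.
rewrite !inTXY => /eqP aX /eqP bX; apply: eq_bigr => i; rewrite inE => /negbTE nXi.
by rewrite spliceE ?aX ?bX // nXi.
Qed.

Lemma swap_halves_union_bound (P : {perm 'I_n} -> Prop) : (0 < #|TT|)%N ->
  4 * Pru TT P - 3 <=
  Pru (setX TT TT) (fun x => P x.1 /\ P x.2 /\ P (swap_halves x).1 /\ P (swap_halves x).2).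
Proof.
move=> TT_gt0; have TT2_gt0 : (0 < #|setX TT TT|)%N by rewrite cardsX muln_gt0 TT_gt0.
have fst1 : Pru (setX TT TT) (fun x => P x.1) = Pru TT P by exact: Pru_fst.
have snd1 : Pru (setX TT TT) (fun x => P x.2) = Pru TT P by exact: Pru_snd.
have fst2 : Pru (setX TT TT) (fun x => P (swap_halves x).1) = Pru TT P.
  by rewrite (Pru_involution (fun x => P x.1) swap_halves_involution).
have snd2 : Pru (setX TT TT) (fun x => P (swap_halves x).2) = Pru TT P.
  by rewrite (Pru_involution (fun x => P x.2) swap_halves_involution).
apply: Rle_trans (Pru_and4 _ _ _ _ TT2_gt0).
by rewrite fst1 snd1 fst2 snd2; lra.
Qed.

Lemma good_swap_dichotomy F (t : R) a b : 0 < t < 1/2 -> a \in TT -> b \in TT ->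
  near_sign t (gfun F X a) -> near_sign t (gfun F X b) ->
  near_sign t (gfun F X (splice X a b)) -> near_sign t (gfun F X (splice X b a)) ->
  dichotomy t (Rabs (g1 F X a - g1 F X b)) (Rabs (g2 F X a - g2 F X b)).
Proof.
rewrite /gfun => t_bounds Ta Tb ga gb gab gba.
rewrite !g1_splice ?g2_splice // in gab gba.
exact: four_sums_dichotomy.
Qed.

End SwapHalves.

Theorem lemma2p6 :
  exists eps0 : R, 0 < eps0 /\
  forall (n : nat) (F : {set {perm 'I_n}}) (f1 : {perm 'I_n} -> R)
         (X Y : {set 'I_n}),
    (2 <= n)%N ->
    is_proj_U1 (fF F) f1 ->
    let eps := ip (fun p => fF F p - f1 p) (fun p => fF F p - f1 p) in
    0 < eps < eps0 ->
    #|X| = #|Y| ->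
    typical F X Y eps ->
    let t := Rpower eps (1/7) in
    Pru (setX (TXY X Y) (TXY X Y))
       (fun ab : {perm 'I_n} * {perm 'I_n} =>
          let d1 := Rabs (g1 F X ab.1 - g1 F X ab.2) in
          let d2 := Rabs (g2 F X ab.1 - g2 F X ab.2) in
          (d1 <= 2 * t /\ d2 <= 2 * t) \/
          (d1 <= 2 * t /\ 2 - 2 * t <= d2 <= 2 + 2 * t) \/
          (2 - 2 * t <= d1 <= 2 + 2 * t /\ d2 <= 2 * t))
     >= 1 - 8 * Rpower eps (2/7).
Proof.
exists (/ 128); split; first lra.
move=> n F f1 X Y _ _ eps eps_bounds _ [almost_bool _] t.
have [t_gt0 t_small] : 0 < t < 1/2 by exact: seventh_root_small.
set good := fun p => near_sign t (gfun F X p).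
have good_prob : 1 - t ^ 4 <= Pru (TXY X Y) good.
  by apply: Rge_le; rewrite -(Rpower_sevenths 4 (proj1 eps_bounds)).
have t2_small : 0 < t ^ 2 < 1 by split; [exact: pow_lt | rewrite /=; nra].
have t4_le : t ^ 4 <= t ^ 2 by rewrite (_ : t ^ 4 = t ^ 2 * t ^ 2); [nra | ring].
have T_gt0 : (0 < #|TXY X Y|)%N.
  by apply: (Pru_nonempty (P := good)); apply: Rlt_le_trans good_prob; lra.
rewrite (Rpower_sevenths 2 (proj1 eps_bounds)) -/t; apply: Rle_ge.
apply: Rle_trans (Rle_trans _ _ _ _ (swap_halves_union_bound good T_gt0)) _; first lra.
apply: Pru_mono => [[a b]] /setXP [Ta Tb] /= [ga [gb [gab gba]]].
exact: good_swap_dichotomy (conj t_gt0 t_small) Ta Tb ga gb gab gba.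
Qed.
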